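(* Let $V\subseteq\mathcal V$ be finite and let $\Theta,\Psi\subseteq\mathcal P(\mathcal H_V)$ be convex and closed. (1) If $\Theta\neq\emptyset$, then $\Theta\preceq_{dem}\Psi$ iff $\Theta\le_S\Psi$. (2) If $\Psi\neq\emptyset$, then $\Theta\preceq_{ang}\Psi$ iff $\Theta\le_H\Psi$.
   Context: $\mathcal H_V$ is a finite-dimensional Hilbert space (tensor product of qubit spaces). $\mathcal D(\mathcal H_V)$: partial density operators (positive, trace $\le1$); $\mathcal P(\mathcal H_V)$: effects (positive operators with eigenvalues in $[0,1]$); $\sqsubseteq$: Löwner order. For $\Theta\subseteq\mathcal P(\mathcal H_V)$ and $\rho\in\mathcal D(\mathcal H_V)$: $\mathrm{Exp}_{dem}(\rho\models\Theta)=\inf_{M\in\Theta}{\rm tr}(M\rho)$ (equal to ${\rm tr}(\rho)$ if $\Theta=\emptyset$) and $\mathrm{Exp}_{ang}(\rho\models\Theta)=\sup_{M\in\Theta}{\rm tr}(M\rho)$ (equal to $0$ if $\Theta=\emptyset$). $\Theta\preceq_{dem}\Psi$ iff $\mathrm{Exp}_{dem}(\rho\models\Theta)\le\mathrm{Exp}_{dem}(\rho\models\Psi)$ for all $\rho\in\mathcal D(\mathcal H_V)$; $\Theta\preceq_{ang}\Psi$ iff $\mathrm{Exp}_{ang}(\rho\models\Theta)\le\mathrm{Exp}_{ang}(\rho\models\Psi)$ for all $\rho\in\mathcal D(\mathcal H_V)$. $\Theta\le_H\Psi$ iff $\forall M\in\Theta\,\exists N\in\Psi: M\sqsubseteq N$;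 $\Theta\le_S\Psi$ iff $\forall N\in\Psi\,\exists M\in\Theta:M\sqsubseteq N$. *)

From HB Require Import structures.
From mathcomp Require Import all_boot all_order all_algebra.
From mathcomp Require Import complex.
From mathcomp Require Import all_classical all_reals topology normedtype.
Import Order.TTheory GRing.Theory Num.Theory numFieldNormedType.Exports.

Set Implicit Arguments. Unset Strict Implicit. Unset Printing Implicit Defensive.

Local Open Scope ring_scope.
Local Open Scope classical_set_scope.

Section QDefs.
Variable R : realType.
Variable d : nat.
Local Notation C := (R[i]).
Local Notation M := ('M[C]_d).

Definition adjmx (A : 'M[C]_(d,d)) : 'M[C]_(d,d) := (map_mx Num.conj A)^T.
Definition adjv (v : 'cV[C]_d) : 'rV[C]_d := (map_mx Num.conj v)^T.

(* positive (semidefinite) operator: <v|A|v> >= 0 for all v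
   (the order on R[i] means: real and nonnegative) *)
Definition psd (A : M) : Prop := forall v : 'cV[C]_d, 0 <= (adjv v *m A *m v) 0 0.

Definition lowner (A B : M) : Prop := psd (B - A).

(* effects P(H_V): positive operators with eigenvalues in [0,1], i.e. 0 <= A <= I *)
Definition effect (A : M) : Prop := psd A /\ lowner A 1%:M.

Definition pdensity (rho : M) : Prop := psd rho /\ \tr rho <= 1.

(* real-valued expectation tr(A rho) (real for A, rho positive) *)
Definition expv (A rho : M) : R := complex.Re (\tr (A *m rho)).

Definition Exp_dem (rho : M) (Th : set M) : R :=
  if pselect (Th = set0) then complex.Re (\tr rho)
  else inf [set expv A rho | A in Th].

Definition Exp_ang (rho : M) (Th : set M) : R :=
  if pselect (Th = set0) then 0
  else sup [set expv A rho | A in Th].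

Definition preceq_dem (Th Ps : set M) : Prop :=
  forall rho, pdensity rho -> Exp_dem rho Th <= Exp_dem rho Ps.
Definition preceq_ang (Th Ps : set M) : Prop :=
  forall rho, pdensity rho -> Exp_ang rho Th <= Exp_ang rho Ps.

Definition le_H (Th Ps : set M) : Prop :=
  forall A, Th A -> exists B, Ps B /\ lowner A B.
Definition le_S (Th Ps : set M) : Prop :=
  forall B, Ps B -> exists A, Th A /\ lowner A B.

Definition mx_convex (Th : set M) : Prop :=
  forall A B, Th A -> Th B -> forall t : R, 0 <= t <= 1 ->
    Th ((t%:C)%C *: A + ((1 - t)%:C)%C *: B).

(* closedness w.r.t. the usual (Euclidean) topology on d x d complex matrices,
   transported through the homeomorphism A |-> (Re A, Im A) onto pairs of real matrices *)
Definition mx_closed (Th : set M) : Prop :=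
  closed ((fun A : M => (map_mx (@complex.Re R) A, map_mx (@complex.Im R) A)) @` Th).

End QDefs.

(** If the Smyth (resp. Hoare) relation fails, some N in Psi lies above no A
in Theta, i.e. N lies outside the closed convex set Theta + PSD (resp. some A in
Theta lies outside Psi - PSD).  Project the point onto that set for the
Hilbert-Schmidt inner product.  The residual H of the nearest point is nonzero,
the first-order optimality conditions make +-H positive, and
rho = +-H / (1 + tr(+-H)) is a partial density operator separating the point
strictly from the set: tr(A rho) >= tr(N rho) + |H|^2 / (1 + tr(+-H)) for all A
in Theta.  Because effects are bounded, this contradicts the expectation order.
The converse implications are monotonicity of tr(. rho) in the Loewner order.
To make the minimisation compact the positive part is confined to a box, large
enough that the minimiser lies in its interior. *)

From mathcomp Require Import all_boot all_order all_algebra.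
From mathcomp Require Import complex.
From mathcomp Require Import all_classical all_reals topology normedtype.
From mathcomp Require Import spectral derive ring lra.

Import Order.TTheory GRing.Theory Num.Theory numFieldNormedType.Exports.
Set Implicit Arguments. Unset Strict Implicit. Unset Printing Implicit Defensive.
Local Open Scope ring_scope.
Local Open Scope classical_set_scope.

Local Notation Re := (@complex.Re _).
Local Notation Im := (@complex.Im _).

Section ComplexParts.
Variable R : realType.
Implicit Types x y : R[i].

Lemma complexP x y : Re x = Re y -> Im x = Im y -> x = y.
Proof. by case: x; case: y => a b c e /= -> ->. Qed.

Lemma ge0_ReIm x : (0 <= x) <-> (Im x = 0 /\ 0 <= Re x).
Proof. by rewrite lecE; split => [/andP[/eqP -> ->]|[-> ->]]; rewrite ?eqxx. Qed.

Lemma Re_conjc x : Re x^*%C = Re x. Proof. by case: x. Qed.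

Lemma Im_conjc x : Im x^*%C = - Im x. Proof. by case: x. Qed.

Lemma Re_mulc x y : Re (x * y) = Re x * Re y - Im x * Im y.
Proof. by case: x; case: y. Qed.

Lemma Im_mulc x y : Im (x * y) = Re x * Im y + Im x * Re y.
Proof. by case: x; case: y. Qed.

Lemma Re_realM (t : R) x : Re (t%:C%C * x) = t * Re x.
Proof. by case: x => a b; simpc. Qed.

Lemma Im_realM (t : R) x : Im (t%:C%C * x) = t * Im x.
Proof. by case: x => a b; simpc. Qed.

Lemma Re_conjc_mul x : Re (x^*%C * x) = Re x ^+ 2 + Im x ^+ 2.
Proof. by case: x => a b; simpc; rewrite /= !expr2; lra. Qed.

End ComplexParts.

Lemma ler_sum_term (R : numDomainType) (I : finType) (F : I -> R) i :
  (forall j, 0 <= F j) -> F i <= \sum_j F j.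
Proof. by move=> F0; rewrite (bigD1 i) //= lerDl sumr_ge0. Qed.

Lemma ge0_of_perturbation (R : realFieldType) (a b : R) :
  0 <= b -> (forall t, 0 < t < 1 -> 0 <= a + t * b) -> 0 <= a.
Proof.
move=> b0 h; rewrite leNgt; apply/negP => a0.
have den : 0 < - a + b + 1 by lra.
pose t := - a / (- a + b + 1).
have t01 : 0 < t < 1.
  by rewrite divr_gt0 ?ltr_pdivrMr //= ?mul1r; lra.
have : t * b < - a by rewrite mulrAC ltr_pdivrMr //; nra.
by have := h t t01; lra.
Qed.

Lemma ler_norm_sqr (R : realDomainType) (y K : R) : y ^+ 2 <= K -> `|y| <= 1 + K.
Proof. by rewrite -real_normK ?num_real // => h; have := normr_ge0 y; nra. Qed.

Lemma continuous_mx (T U : topologicalType) m n (f : T -> 'M[U]_(m, n)) :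
  (forall i j, continuous (fun x => f x i j)) -> continuous f.
Proof.
move=> fc x A /= [P Pn PA].
have : \forall y \near x, forall k : 'I_m * 'I_n, P k.1 k.2 (f y k.1 k.2).
  by apply: filter_forall => k; exact: (fc k.1 k.2 x _ (Pn k.1 k.2)).
by apply: filterS => y Hy; apply: PA => i j; exact: (Hy (i, j)).
Qed.

Lemma continuous_pair (T U V : topologicalType) (f : T -> U) (g : T -> V) :
  continuous f -> continuous g -> continuous (fun x => (f x, g x)).
Proof. by move=> fc gc x; apply: cvg_pair; [exact: fc|exact: gc]. Qed.

Section ContinuousParts.
Variables (R : realType) (T : topologicalType).
Implicit Types f g : T -> R[i].

Lemma continuous_sumr (I : Type) (r : seq I) (F : I -> T -> R) :
  (forall i, continuous (F i)) -> continuous (fun x => \sum_(i <- r) F i x).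
Proof.
move=> Fc; apply: (@continuous_big R I +%R 0 predT); first exact: add_continuous.
by move=> i _; exact: Fc.
Qed.

Definition cx_continuous f := continuous (fun x => Re (f x)) /\ continuous (fun x => Im (f x)).

Lemma cx_continuous_cst (c : R[i]) : cx_continuous (fun=> c).
Proof. by split; exact: cst_continuous. Qed.

Lemma cx_continuousD f g :
  cx_continuous f -> cx_continuous g -> cx_continuous (fun x => f x + g x).
Proof.
move=> [f1 f2] [g1 g2]; split => x.
- under eq_fun do rewrite raddfD; exact: continuousD (f1 x) (g1 x).
- under eq_fun do rewrite raddfD; exact: continuousD (f2 x) (g2 x).
Qed.

Lemma cx_continuousM f g :
  cx_continuous f -> cx_continuous g -> cx_continuous (fun x => f x * g x).
Proof.
move=> [f1 f2] [g1 g2]; split => x.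
- under eq_fun do rewrite Re_mulc.
  exact: continuousB (continuousM (f1 x) (g1 x)) (continuousM (f2 x) (g2 x)).
- under eq_fun do rewrite Im_mulc.
  exact: continuousD (continuousM (f1 x) (g2 x)) (continuousM (f2 x) (g1 x)).
Qed.

Lemma cx_continuous_conj f : cx_continuous f -> cx_continuous (fun x => (f x)^*%C).
Proof.
move=> [f1 f2]; split => x.
- under eq_fun do rewrite Re_conjc; exact: f1.
- under eq_fun do rewrite Im_conjc; exact: continuousN (f2 x).
Qed.

Lemma cx_continuous_sum (I : Type) (r : seq I) (F : I -> T -> R[i]) :
  (forall i, cx_continuous (F i)) -> cx_continuous (fun x => \sum_(i <- r) F i x).
Proof.
move=> Fc; split.
- under eq_fun do rewrite raddf_sum.
  by apply: continuous_sumr => i; case: (Fc i).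
- under eq_fun do rewrite raddf_sum.
  by apply: continuous_sumr => i; case: (Fc i).
Qed.

End ContinuousParts.

Section PositiveOperators.
Variables (R : realType) (d : nat).
Local Notation C := R[i].
Local Notation M := 'M[C]_d.
Local Notation V := 'cV[C]_d.
Implicit Types (A B Y Z : M) (u v : V).

Definition sesq A u v : C := (adjv u *m A *m v) 0 0.

Lemma sesqE A u v : sesq A u v = \sum_i \sum_j (u i 0)^*%C * A i j * v j 0.
Proof.
rewrite /sesq mxE; under eq_bigr => j _ do rewrite mxE mulr_suml.
rewrite exchange_big /=; apply: eq_bigr => i _; apply: eq_bigr => j _.
by rewrite !mxE.
Qed.

Lemma sesqDl A B u v : sesq (A + B) u v = sesq A u v + sesq B u v.
Proof. by rewrite /sesq mulmxDr mulmxDl mxE. Qed.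

Lemma sesqZl c A u v : sesq (c *: A) u v = c * sesq A u v.
Proof. by rewrite /sesq -scalemxAr -scalemxAl mxE. Qed.

Lemma sesqBl A B u v : sesq (A - B) u v = sesq A u v - sesq B u v.
Proof. by rewrite sesqDl -scaleN1r sesqZl mulN1r. Qed.

Lemma sesqDr A u w v : sesq A v (u + w) = sesq A v u + sesq A v w.
Proof. by rewrite /sesq mulmxDr mxE. Qed.

Lemma sesqZr A c u v : sesq A v (c *: u) = c * sesq A v u.
Proof. by rewrite /sesq -scalemxAr mxE. Qed.

Lemma sesqDv A u w v : sesq A (u + w) v = sesq A u v + sesq A w v.
Proof.
rewrite !sesqE -big_split; apply: eq_bigr => i _; rewrite -big_split.
by apply: eq_bigr => j _; rewrite !mxE rmorphD /= !mulrDl.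
Qed.

Lemma sesqZv A c u v : sesq A (c *: u) v = c^*%C * sesq A u v.
Proof.
rewrite !sesqE mulr_sumr; apply: eq_bigr => i _; rewrite mulr_sumr.
by apply: eq_bigr => j _; rewrite !mxE rmorphM /= !mulrA.
Qed.

Definition basis_vec (i : 'I_d) : V := delta_mx i 0.

Lemma sesq_basis A i j : sesq A (basis_vec i) (basis_vec j) = A i j.
Proof.
rewrite /sesq; have -> : adjv (basis_vec i) = delta_mx 0 i.
  by apply/matrixP => a b; rewrite !mxE rmorph_nat andbC.
by rewrite -(rowE i A) -colE !mxE.
Qed.

Lemma sesq_polar A i j (c : C) :
  let v := basis_vec i + c *: basis_vec j in
  sesq A v v = A i i + c * A i j + c^*%C * A j i + c^*%C * c * A j j.
Proof. by rewrite /= !(sesqDv, sesqDr, sesqZv, sesqZr) !sesq_basis !addrA mulrA. Qed.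

Lemma psd_hermitian A : psd A -> forall i j, A j i = (A i j)^*%C.
Proof.
move=> pA i j.
have Im0 v : Im (sesq A v v) = 0 by have /ge0_ReIm[] := pA v.
have := Im0 (basis_vec i + 1 *: basis_vec j).
have := Im0 (basis_vec i + 'i%C *: basis_vec j).
rewrite !sesq_polar; have := Im0 (basis_vec i); have := Im0 (basis_vec j).
rewrite !sesq_basis; case: (A i i) (A j j) (A i j) (A j i) => [? ?] [? ?] [? ?] [? ?] /=.
by move=> -> ->; simpc => /= h1 h2; apply: complexP => /=; lra.
Qed.

Lemma psd_hermsym A : psd A -> A \is hermsymmx.
Proof.
move=> pA; apply/eqP/matrixP => i j; rewrite !mxE expr0 mul1r.
rewrite (psd_hermitian pA i j); exact/esym/conjcK.
Qed.

Definition in_box (c : R) Z := forall i j, `|Re (Z i j)| <= c /\ `|Im (Z i j)| <= c.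

Lemma in_box_zero c Z : in_box c Z -> in_box c 0.
Proof. by move=> hZ i j; have [h _] := hZ i j; rewrite mxE normr0 (le_trans _ h). Qed.

Lemma in_boxD a b Y Z : in_box a Y -> in_box b Z -> in_box (a + b) (Y + Z).
Proof.
move=> hY hZ i j; have [y1 y2] := hY i j; have [z1 z2] := hZ i j.
by rewrite mxE !raddfD; split; apply: le_trans (ler_normD _ _) _; apply: lerD.
Qed.

Lemma in_boxZ (t c : R) Z : 0 <= t -> in_box c Z -> in_box (t * c) (t%:C%C *: Z).
Proof.
move=> t0 hZ i j; have [z1 z2] := hZ i j.
by rewrite mxE Re_realM Im_realM !normrM ger0_norm //; split; apply: ler_wpM2l.
Qed.

Lemma in_box_le a b Z : a <= b -> in_box a Z -> in_box b Z.
Proof. by move=> ab hZ i j; have [? ?] := hZ i j; split; apply: le_trans ab. Qed.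

Lemma in_box1_scale Z : exists2 t, 0 < t & in_box 1 (t%:C%C *: Z).
Proof.
pose F i j := `|Re (Z i j)| + `|Im (Z i j)|.
have F0 i j : 0 <= F i j by rewrite addr_ge0.
have Fsum i j : F i j <= \sum_i \sum_j F i j.
  apply: le_trans (ler_sum_term _ (F0 i)) _.
  exact: ler_sum_term (fun k => sumr_ge0 _ (fun l _ => F0 k l)).
have c0 : 0 < 1 + \sum_i \sum_j F i j.
  by rewrite ltr_pwDl // sumr_ge0 // => i _; apply: sumr_ge0 => j _; exact: F0.
exists (1 + \sum_i \sum_j F i j)^-1; first by rewrite invr_gt0.
rewrite -[X in in_box X](mulVf (lt0r_neq0 c0)); apply: in_boxZ; first by rewrite invr_ge0 ltW.
move=> i j; have := Fsum i j; rewrite /F.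
by have := normr_ge0 (Re (Z i j)); have := normr_ge0 (Im (Z i j)); split; lra.
Qed.

Lemma mxtrace_psd_ge0 A : psd A -> 0 <= \tr A.
Proof. by move=> pA; apply: sumr_ge0 => i _; rewrite -sesq_basis; exact: pA. Qed.

Lemma effect_in_box A : effect A -> in_box 2 A.
Proof.
move=> [pA pIA] i j.
have Re_ge0 B v : psd B -> 0 <= Re (sesq B v v) by move=> /(_ v) /ge0_ReIm[].
have diag k : 0 <= Re (A k k) <= 1.
  have := Re_ge0 _ (basis_vec k) pA; have := Re_ge0 _ (basis_vec k) pIA.
  by rewrite sesqBl !sesq_basis mxE eqxx raddfB /=; lra.
have one k l : (1%:M : M) k l = ((k == l)%:R : R)%:C%C by rewrite mxE; case: (k == l).
have : 0 <= Re (((i == j)%:R : R)%:C%C) <= 1 by case: (i == j) => /=; lra.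
have polar c :
    0 <= Re (sesq A (basis_vec i + c *: basis_vec j) (basis_vec i + c *: basis_vec j)) /\
    0 <= Re (sesq (1%:M - A) (basis_vec i + c *: basis_vec j) (basis_vec i + c *: basis_vec j)).
  by split; apply: Re_ge0.
move: (polar 1) (polar 'i%C) (diag i) (diag j).
rewrite !sesqBl !sesq_polar !one !eqxx eq_sym (psd_hermitian pA i j).
case: (A i i) (A j j) (A i j) => [? ?] [? ?] [? ?] /=; move: ((j == i)%:R : R) => e.
by move=> [? ?] [? ?] *; rewrite !ler_norml; split; apply/andP; split; lra.
Qed.

Lemma psd0 : psd (0 : M).
Proof. by move=> v; rewrite mulmx0 mul0mx mxE. Qed.

Lemma psdD A B : psd A -> psd B -> psd (A + B).
Proof. by move=> pA pB v; rewrite -/(sesq _ v v) sesqDl addr_ge0 //; [exact: pA|exact: pB]. Qed.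

Lemma psdZ (t : R) A : 0 <= t -> psd A -> psd (t%:C%C *: A).
Proof. by move=> t0 pA v; rewrite -/(sesq _ v v) sesqZl mulr_ge0 ?ler0c //; exact: pA. Qed.

Lemma psd_rank1 v : psd (v *m adjv v).
Proof.
move=> u; rewrite mulmxA -[adjv u *m v *m adjv v *m u]mulmxA mxE big_ord1.
set z := (adjv u *m v) 0 0; suff -> : (adjv v *m u) 0 0 = z^*%C by exact: mulcJ_ge0.
rewrite /z !mxE rmorph_sum; apply: eq_bigr => k _.
by rewrite !mxE rmorphM /= conjcK mulrC.
Qed.

Lemma conjmx_diag_sesq (P A : M) k :
  (P *m A *m map_mx Num.conj P^T) k k =
  sesq A (\col_a (P k a)^*%C) (\col_a (P k a)^*%C).
Proof.
rewrite sesqE mxE; under eq_bigr => b _ do rewrite mxE mulr_suml.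
rewrite exchange_big /=; apply: eq_bigr => a _; apply: eq_bigr => b _.
by rewrite !mxE conjcK.
Qed.

Lemma mxtrace_psdM_ge0 A B : psd A -> psd B -> 0 <= \tr (A *m B).
Proof.
move=> pA pB; have Bn : B \is normalmx by apply/hermitian_normalmx/psd_hermsym.
set P := spectralmx B; set D := spectral_diag B.
have eB : B = invmx P *m diag_mx D *m P by exact/orthomx_spectralP.
have eP : invmx P = map_mx Num.conj P^T by rewrite invmx_unitary ?spectral_unitarymx.
have eD : P *m B *m map_mx Num.conj P^T = diag_mx D.
  by rewrite eB -eP !mulmxA mulmxV ?spectral_unit // mul1mx -mulmxA mulmxV ?spectral_unit // mulmx1.
rewrite eB eP mulmxA mxtrace_mulC !mulmxA /mxtrace; apply: sumr_ge0 => k _.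
rewrite mul_mx_diag mxE; apply: mulr_ge0; first by rewrite conjmx_diag_sesq; exact: pA.
have -> : D 0 k = diag_mx D k k by rewrite mxE eqxx mulr1n.
by rewrite -eD conjmx_diag_sesq; exact: pB.
Qed.

End PositiveOperators.

Section HilbertSchmidt.
Variables (R : realType) (d : nat).
Local Notation C := R[i].
Local Notation M := 'M[C]_d.
Implicit Types (A H Y Z : M) (t : R).

Definition hsdot Z Y : R := \sum_i \sum_j Re ((Z i j)^*%C * Y i j).
Definition hsnorm2 Z := hsdot Z Z.

Lemma hsdotC Z Y : hsdot Z Y = hsdot Y Z.
Proof.
apply: eq_bigr => i _; apply: eq_bigr => j _.
by case: (Z i j) (Y i j) => [? ?] [? ?] /=; ring.
Qed.

Lemma hsdotDr Z Y1 Y2 : hsdot Z (Y1 + Y2) = hsdot Z Y1 + hsdot Z Y2.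
Proof.
rewrite /hsdot -big_split; apply: eq_bigr => i _; rewrite -big_split.
by apply: eq_bigr => j _; rewrite mxE mulrDr raddfD.
Qed.

Lemma hsdotZr Z t Y : hsdot Z (t%:C%C *: Y) = t * hsdot Z Y.
Proof.
rewrite /hsdot mulr_sumr; apply: eq_bigr => i _; rewrite mulr_sumr.
by apply: eq_bigr => j _; rewrite mxE mulrCA Re_realM.
Qed.

Lemma hsdotNr Z Y : hsdot Z (- Y) = - hsdot Z Y.
Proof. by rewrite -scaleN1r -(rmorphN1 (real_complex R)) hsdotZr mulN1r. Qed.

Lemma hsdotBr Z Y1 Y2 : hsdot Z (Y1 - Y2) = hsdot Z Y1 - hsdot Z Y2.
Proof. by rewrite hsdotDr hsdotNr. Qed.

Lemma hsdotDl Z1 Z2 Y : hsdot (Z1 + Z2) Y = hsdot Z1 Y + hsdot Z2 Y.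
Proof. by rewrite hsdotC hsdotDr ![hsdot Y _]hsdotC. Qed.

Lemma hsdotZl t Z Y : hsdot (t%:C%C *: Z) Y = t * hsdot Z Y.
Proof. by rewrite hsdotC hsdotZr hsdotC. Qed.

Lemma hsnorm2_ge0 Z : 0 <= hsnorm2 Z.
Proof.
by apply: sumr_ge0 => i _; apply: sumr_ge0 => j _; rewrite Re_conjc_mul addr_ge0 ?sqr_ge0.
Qed.

Lemma entry_le_hsnorm2 Z i j : Re (Z i j) ^+ 2 + Im (Z i j) ^+ 2 <= hsnorm2 Z.
Proof.
have F0 k l : 0 <= Re ((Z k l)^*%C * Z k l) by rewrite Re_conjc_mul addr_ge0 ?sqr_ge0.
rewrite -Re_conjc_mul; apply: le_trans (ler_sum_term _ (F0 i)) _.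
exact: ler_sum_term (fun k => sumr_ge0 _ (fun l _ => F0 k l)).
Qed.

Lemma hsnorm2_eq0 Z : hsnorm2 Z = 0 -> Z = 0.
Proof.
move=> Z0; apply/matrixP => i j; have := entry_le_hsnorm2 Z i j.
have := sqr_ge0 (Re (Z i j)); have := sqr_ge0 (Im (Z i j)); rewrite Z0 mxE => ? ? ?.
by apply: complexP; apply/eqP; rewrite /= -sqrf_eq0 eq_le sqr_ge0 andbT; lra.
Qed.

Lemma hsnorm2_DZ H D t :
  hsnorm2 (H + t%:C%C *: D) = hsnorm2 H + 2 * t * hsdot H D + t ^+ 2 * hsnorm2 D.
Proof. by rewrite /hsnorm2 !(hsdotDl, hsdotDr, hsdotZl, hsdotZr) [hsdot D H]hsdotC; ring. Qed.

Lemma hsdot_rank1 H v : hsdot H (v *m adjv v) = Re (sesq H v v).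
Proof.
rewrite sesqE raddf_sum; apply: eq_bigr => i _; rewrite raddf_sum; apply: eq_bigr => j _.
rewrite !mxE big_ord1 !mxE.
by case: (H i j) (v i 0) (v j 0) => [? ?] [? ?] [? ?] /=; ring.
Qed.

Lemma expv_hsdot A rho : psd rho -> expv A rho = hsdot rho A.
Proof.
move=> /psd_hermitian rhoH; rewrite /expv /mxtrace raddf_sum; apply: eq_bigr => i _.
rewrite mxE raddf_sum; apply: eq_bigr => j _.
by rewrite [rho i j]rhoH conjcK mulrC.
Qed.

End HilbertSchmidt.

Section Encoding.
Variables (R : realType) (d : nat).
Local Notation C := R[i].
Local Notation M := 'M[C]_d.

(* Pairs of complex matrices are coded as real row vectors, where boxes are
   compact (rV_compact): slot (b, im, (i, j)) is the real (im = false) or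
   imaginary part of entry (i, j) of the first (b = false) or second matrix. *)
Definition slot_index := (bool * bool * ('I_d * 'I_d))%type.
Local Notation W := 'rV[R]_#|{: slot_index}|.

Definition slot (w : W) (k : slot_index) : R := w ord0 (enum_rank k).

Definition decode_mx (w : W) (b : bool) : M :=
  \matrix_(i, j) (slot w (b, false, (i, j)) +i* slot w (b, true, (i, j)))%C.

Definition encode_mx (A P : M) : W :=
  \row_k let: (b, im, (i, j)) := enum_val k in
         (if im then Im else Re) ((if b then P else A) i j).

Lemma slot_encode A P b im i j :
  slot (encode_mx A P) (b, im, (i, j)) = (if im then Im else Re) ((if b then P else A) i j).
Proof. by rewrite /slot mxE enum_rankK. Qed.

Lemma decode_encode A P b : decode_mx (encode_mx A P) b = if b then P else A.
Proof.
by apply/matrixP => i j; rewrite mxE !slot_encode /=; case: (_ i j).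
Qed.

Lemma cx_continuous_decode b i j : cx_continuous (fun w : W => decode_mx w b i j).
Proof.
by split; under eq_fun do rewrite mxE; exact: coord_continuous.
Qed.

Lemma box_slotP (c : R) (w : W) :
  (forall k, `[-c, c]%classic (w ord0 k)) <-> (forall k, `|slot w k| <= c).
Proof.
split => [h k | h k]; first by have := h (enum_rank k); rewrite /= in_itv /= -ler_norml.
by rewrite /= in_itv /= -ler_norml -[k]enum_valK; exact: h.
Qed.

Lemma in_box_decode (c : R) (w : W) b : (forall k, `|slot w k| <= c) -> in_box c (decode_mx w b).
Proof. by move=> h i j; rewrite !mxE /=; split; apply: h. Qed.

Lemma slot_encode_le (c : R) A P :
  in_box c A -> in_box c P -> forall k, `|slot (encode_mx A P) k| <= c.
Proof.
move=> hA hP [[b im] [i j]]; rewrite slot_encode.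
by case: b im => -[]; [case: (hP i j)|case: (hP i j)|case: (hA i j)|case: (hA i j)].
Qed.

End Encoding.

Section NearestPoint.
Variables (R : realType) (d : nat).
Local Notation C := R[i].
Local Notation M := 'M[C]_d.
Local Notation W := 'rV[R]_#|{: slot_index d}|.
Variables (A : set M) (X : M) (s c : R).

Lemma closed_psd_decode : closed [set w : W | psd (decode_mx w true)].
Proof.
have sesq_cont v : cx_continuous (fun w : W => sesq (decode_mx w true) v v).
  under eq_fun do rewrite sesqE.
  apply: cx_continuous_sum => i; apply: cx_continuous_sum => j.
  apply: cx_continuousM (cx_continuous_cst _ _).
  exact: cx_continuousM (cx_continuous_cst _ _) (cx_continuous_decode _ _ _ _).
have -> : [set w : W | psd (decode_mx w true)] = \bigcap_(v in [set: 'cV[C]_d])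
    ([set w | Im (sesq (decode_mx w true) v v) = 0] `&`
     [set w | 0 <= Re (sesq (decode_mx w true) v v)]).
  apply/seteqP; split => w /=.
    by move=> pw v _; apply/ge0_ReIm; exact: pw.
  by move=> h v; apply/ge0_ReIm; exact: h.
apply: closed_bigI => v _; have [ReC ImC] := sesq_cont v; apply: closedI.
- apply: (@preimage_closed _ _ _ [set 0]); last exact: closed_eq.
  by move=> w _; exact: ImC.
- apply: (@preimage_closed _ _ (fun w : W => Re (sesq (decode_mx w true) v v)) [set x | 0 <= x]).
    by move=> w _; exact: ReC.
  exact: closed_ge.
Qed.

Lemma closed_decode : mx_closed A -> closed [set w : W | A (decode_mx w false)].
Proof.
move=> clA; pose parts (Z : M) := (map_mx Re Z, map_mx Im Z).
have -> : [set w : W | A (decode_mx w false)] =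
    (fun w => parts (decode_mx w false)) @^-1` (parts @` A).
  apply/seteqP; split => w /=; first by move=> Aw; exists (decode_mx w false).
  move=> [Z AZ [/matrixP eRe /matrixP eIm]]; suff <- : Z = decode_mx w false by [].
  by apply/matrixP => i j; apply: complexP; [move: (eRe i j)|move: (eIm i j)]; rewrite !mxE.
have parts_cont : continuous (fun w : W => parts (decode_mx w false)).
  by apply: continuous_pair; apply: continuous_mx => i j;
    under eq_fun do rewrite mxE; case: (cx_continuous_decode R false i j).
exact: preimage_closed (fun w _ => parts_cont w) clA.
Qed.

Lemma continuous_residual :
  continuous (fun w : W => hsnorm2 (decode_mx w false + s%:C%C *: decode_mx w true - X)).
Proof.
apply: continuous_sumr => i; apply: continuous_sumr => j.
have : cx_continuous (fun w : W => (decode_mx w false + s%:C%C *: decode_mx w true - X) i j).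
  have entry w : (decode_mx w false + s%:C%C *: decode_mx w true - X) i j =
      decode_mx w false i j + s%:C%C * decode_mx w true i j - X i j by rewrite !mxE.
  under eq_fun do rewrite entry.
  apply: cx_continuousD (cx_continuous_cst _ _).
  exact: cx_continuousD (cx_continuous_decode _ _ _ _)
    (cx_continuousM (cx_continuous_cst _ _) (cx_continuous_decode _ _ _ _)).
by move=> fc; case: (cx_continuousM (cx_continuous_conj fc) fc).
Qed.

Definition nearest_pair (Ms Ps : M) :=
  [/\ A Ms, psd Ps, in_box c Ps &
      forall Y P, A Y -> psd P -> in_box c P ->
        hsnorm2 (Ms + s%:C%C *: Ps - X) <= hsnorm2 (Y + s%:C%C *: P - X)].

Lemma exists_nearest_pair :
  A !=set0 -> mx_closed A -> (forall Z, A Z -> in_box c Z) -> exists Ms Ps, nearest_pair Ms Ps.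
Proof.
move=> [M0 AM0] clA Abox.
have box0 := in_box_zero (Abox _ AM0).
set Box := [set w : W | forall k, `[-c, c]%classic (w ord0 k)].
set D := [set w : W | A (decode_mx w false)] `&` [set w : W | psd (decode_mx w true)].
have cptBD : compact (Box `&` D).
  apply: compact_closedI; last exact: closedI (closed_decode clA) closed_psd_decode.
  exact: (@rV_compact _ _ (fun=> `[-c, c]%classic) (fun=> @segment_compact _ _ _)).
have encBD Y P : A Y -> psd P -> in_box c P -> (Box `&` D) (encode_mx Y P).
  move=> AY pP bP; split; first by apply/box_slotP/slot_encode_le => //; exact: Abox.
  by rewrite /D /= !decode_encode.
have [w /set_mem[Bw [Aw pw]] wmin] :=
  compact_EVT_min (ex_intro _ _ (encBD _ _ AM0 (@psd0 R d) box0)) cptBD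
    (continuous_subspaceT continuous_residual).
exists (decode_mx w false), (decode_mx w true); split => //.
  exact/in_box_decode/box_slotP.
move=> Y P AY pP bP; have := wmin _ (mem_set (encBD _ _ AY pP bP)).
by rewrite !decode_encode.
Qed.

Lemma nearest_pair_variational Ms Ps : mx_convex A -> nearest_pair Ms Ps ->
  forall Y P, A Y -> psd P -> in_box c P ->
  0 <= hsdot (Ms + s%:C%C *: Ps - X) (Y - Ms + s%:C%C *: (P - Ps)).
Proof.
move=> cvxA [AMs pPs bPs Pmin] Y P AY pP bP.
set H := Ms + _ - X; set D := Y - Ms + _.
apply: (@ge0_of_perturbation _ _ (hsnorm2 D / 2)) => [|t /andP[t0 t1]].
  by rewrite divr_ge0 ?hsnorm2_ge0.
have t01 : 0 <= t <= 1 by rewrite !ltW.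
have pPt : psd (t%:C%C *: P + (1 - t)%:C%C *: Ps).
  by apply: psdD; apply: psdZ => //; lra.
have bPt : in_box c (t%:C%C *: P + (1 - t)%:C%C *: Ps).
  have t1' : 0 <= 1 - t by lra.
  by have := in_boxD (in_boxZ (ltW t0) bP) (in_boxZ t1' bPs); rewrite -mulrDl subrKC mul1r.
have := Pmin _ _ (cvxA _ _ AY AMs t t01) pPt bPt.
have -> : (t%:C%C *: Y + (1 - t)%:C%C *: Ms) + s%:C%C *: (t%:C%C *: P + (1 - t)%:C%C *: Ps) - X
    = H + t%:C%C *: D.
  by apply/matrixP => i j; rewrite !mxE rmorphB rmorph1 /=; ring.
rewrite hsnorm2_DZ -/(hsnorm2 H) => h.
suff : 0 <= t * (2 * hsdot H D + t * hsnorm2 D) by rewrite pmulr_rge0 //; lra.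
by nra.
Qed.

End NearestPoint.

Section Separation.
Variables (R : realType) (d : nat).
Local Notation C := R[i].
Local Notation M := 'M[C]_d.
Implicit Types (Y Z P K : M).

Lemma in_box_of_residual X Y P (s k : R) : s = 1 \/ s = -1 -> effect X -> effect Y ->
  hsnorm2 (Y + s%:C%C *: P - X) <= k -> in_box (k + 5) P.
Proof.
move=> s_sign eX eY Pk i j; have := entry_le_hsnorm2 (Y + s%:C%C *: P - X) i j.
rewrite !mxE !raddfB !raddfD /= Re_realM Im_realM => hZ.
have /ler_norm_sqr hr : (Re (Y i j) + s * Re (P i j) - Re (X i j)) ^+ 2 <= k.
  by apply: le_trans Pk; apply: le_trans hZ; rewrite lerDl sqr_ge0.
have /ler_norm_sqr hi : (Im (Y i j) + s * Im (P i j) - Im (X i j)) ^+ 2 <= k.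
  by apply: le_trans Pk; apply: le_trans hZ; rewrite lerDr sqr_ge0.
move: hr hi (effect_in_box eX i j) (effect_in_box eY i j).
by case: s_sign => ->; rewrite !ler_norml => /andP[? ?] /andP[? ?] [/andP[? ?] /andP[? ?]]
  [/andP[? ?] /andP[? ?]]; split; apply/andP; split; lra.
Qed.

Lemma pdensity_normalize K : psd K -> pdensity (((1 + Re (\tr K))^-1)%:C%C *: K).
Proof.
move=> pK; have /ge0_ReIm[trIm trRe] := mxtrace_psd_ge0 pK.
have t0 : 0 < 1 + Re (\tr K) by rewrite ltr_pwDl.
split; first by apply: psdZ pK; rewrite invr_ge0 ltW.
rewrite mxtraceZ lecE Im_realM trIm mulr0 eqxx Re_realM /=.
by rewrite mulrC ler_pdivrMr // mul1r lerDr.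
Qed.

Variables (A : set M) (X : M) (s : R).
Hypotheses (s_sign : s = 1 \/ s = -1) (effA : A `<=` @effect R d) (effX : effect X).

Lemma exists_interior_nearest_pair : A !=set0 -> mx_closed A ->
  exists c Ms Ps, nearest_pair A X s c Ms Ps /\ in_box (c - 1) Ps.
Proof.
(* The residual at (M0, 0) bounds the positive part of the minimiser by k + 5,
   strictly inside the box of size k + 6. *)
move=> [M0 AM0] clA; set k := hsnorm2 (M0 - X); have k0 : 0 <= k := hsnorm2_ge0 _.
have Abox Z : A Z -> in_box (k + 6) Z by move=> /effA /effect_in_box; apply: in_box_le; lra.
have [Ms [Ps near]] := exists_nearest_pair X s (ex_intro _ _ AM0) clA Abox.
exists (k + 6), Ms, Ps; split => //; have [AMs _ _ Pmin] := near.
have := Pmin _ _ AM0 (@psd0 R d) (in_box_zero (Abox _ AM0)).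
rewrite scaler0 addr0 => /(in_box_of_residual s_sign effX (effA AMs)).
by apply: in_box_le; rewrite /k; lra.
Qed.

Section NearestResidual.
Variables (c : R) (Ms Ps : M).
Hypotheses (cvxA : mx_convex A) (near : nearest_pair A X s c Ms Ps) (Ps_int : in_box (c - 1) Ps).
Let H := Ms + s%:C%C *: Ps - X.

Lemma residual_psd : psd (s%:C%C *: H).
Proof.
have [AMs pPs _ _] := near.
move=> v; rewrite -/(sesq _ v v) sesqZl; apply/ge0_ReIm; split.
  have Im0 Z : psd Z -> Im (sesq Z v v) = 0 by move=> pZ; have /ge0_ReIm[] := pZ v.
  rewrite Im_realM /H sesqBl sesqDl sesqZl !raddfB !raddfD /= Im_realM.
  have [pMs pX] : psd Ms /\ psd X by split; [exact: (effA AMs).1|exact: effX.1].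
  by rewrite !Im0 //; ring.
have [t t0 bt] := in_box1_scale (v *m adjv v).
have pP : psd (Ps + t%:C%C *: (v *m adjv v)) by apply/psdD/psdZ/psd_rank1 => //; exact: ltW.
have bP : in_box c (Ps + t%:C%C *: (v *m adjv v)) by rewrite -(subrK 1 c); exact: in_boxD.
have := nearest_pair_variational cvxA near AMs pP bP.
rewrite (subrr Ms) add0r (addrC Ps) addrK !hsdotZr hsdot_rank1 -/H Re_realM.
by rewrite mulrCA pmulr_rge0.
Qed.

Lemma residual_dot_Ps : s * hsdot H Ps <= 0.
Proof.
have [AMs _ bPs _] := near.
have := nearest_pair_variational cvxA near AMs (@psd0 R d) (in_box_zero bPs).
by rewrite (subrr Ms) add0r sub0r scalerN hsdotNr hsdotZr -/H oppr_ge0.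
Qed.

Lemma residual_dot_A Z : A Z -> hsdot H Ms <= hsdot H Z.
Proof.
have [_ pPs bPs _] := near.
move=> AZ; have := nearest_pair_variational cvxA near AZ pPs bPs.
by rewrite (subrr Ps) scaler0 addr0 hsdotBr subr_ge0.
Qed.

End NearestResidual.

Lemma separating_density : A !=set0 -> mx_closed A -> mx_convex A ->
  ~ (exists2 Z, A Z & psd (s%:C%C *: (X - Z))) ->
  exists2 rho, pdensity rho & exists2 delta, 0 < delta &
    forall Z, A Z -> s * expv X rho + delta <= s * expv Z rho.
Proof.
move=> A0 clA cvxA noZ.
have [c [Ms [Ps [near Ps_int]]]] := exists_interior_nearest_pair A0 clA.
have [AMs pPs _ _] := near.
have s2 : s * s = 1 by case: s_sign => ->; rewrite ?mulrNN mulr1.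
set H := Ms + s%:C%C *: Ps - X.
have H0 : 0 < hsnorm2 H.
  rewrite lt0r hsnorm2_ge0 andbT; apply/eqP => /hsnorm2_eq0 H0; apply: noZ.
  exists Ms => //; suff -> : X = Ms + s%:C%C *: Ps.
    by rewrite addrC addKr scalerA -rmorphM s2 scale1r.
  by apply/eqP; rewrite eq_sym -subr_eq0 -/H H0.
set K := s%:C%C *: H; have pK : psd K := residual_psd cvxA near Ps_int.
set tau := (1 + Re (\tr K))^-1.
have tau0 : 0 < tau by rewrite invr_gt0 ltr_pwDl //; have /ge0_ReIm[] := mxtrace_psd_ge0 pK.
have rho_dens := pdensity_normalize pK.
have eZ Z : s * expv Z (tau%:C%C *: K) = tau * hsdot H Z.
  rewrite expv_hsdot; last exact: rho_dens.1.
  by rewrite 2!hsdotZl mulrCA [s * (s * _)]mulrA s2 mul1r.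
have eH : hsnorm2 H = hsdot H Ms + s * hsdot H Ps - hsdot H X.
  by rewrite -hsdotZr -hsdotDr -hsdotBr.
exists (tau%:C%C *: K) => //; exists (tau * hsnorm2 H); first exact: mulr_gt0.
move=> Z AZ; rewrite !eZ -mulrDr ler_pM2l //.
by have := residual_dot_Ps cvxA near; have := residual_dot_A cvxA near AZ; lra.
Qed.

End Separation.

Section Expectations.
Variables (R : realType) (d : nat).
Local Notation M := 'M[R[i]]_d.
Implicit Types (A B rho : M) (Th : set M).

Lemma expv_ge0 A rho : psd A -> psd rho -> 0 <= expv A rho.
Proof. by move=> pA prho; have /ge0_ReIm[] := mxtrace_psdM_ge0 pA prho. Qed.

Lemma lowner_expv A B rho : lowner A B -> psd rho -> expv A rho <= expv B rho.
Proof.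
move=> AB prho; rewrite -subr_ge0 /expv -raddfB -linearB -mulmxBl.
exact: expv_ge0.
Qed.

Lemma effect_expv_le A rho : effect A -> psd rho -> expv A rho <= Re (\tr rho).
Proof. by move=> [_ A1] prho; have := lowner_expv A1 prho; rewrite /expv mul1mx. Qed.

Lemma Exp_dem_set0 rho : Exp_dem rho set0 = Re (\tr rho).
Proof. by rewrite /Exp_dem; case: pselect => // -[]. Qed.

Lemma Exp_ang_set0 rho : Exp_ang rho set0 = 0.
Proof. by rewrite /Exp_ang; case: pselect => // -[]. Qed.

Lemma Exp_dem_inf Th rho : Th !=set0 -> Exp_dem rho Th = inf [set expv A rho | A in Th].
Proof. by move=> [A ThA]; rewrite /Exp_dem; case: pselect => // Th0; rewrite Th0 in ThA. Qed.

Lemma Exp_ang_sup Th rho : Th !=set0 -> Exp_ang rho Th = sup [set expv A rho | A in Th].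
Proof. by move=> [A ThA]; rewrite /Exp_ang; case: pselect => // Th0; rewrite Th0 in ThA. Qed.

Lemma Exp_dem_le Th A rho : Th `<=` @effect R d -> psd rho -> Th A -> Exp_dem rho Th <= expv A rho.
Proof.
move=> effTh prho ThA; rewrite Exp_dem_inf; last by exists A.
apply: ge_inf; last by exists A.
by exists 0 => _ [B ThB <-]; apply: expv_ge0 (effTh _ ThB).1 prho.
Qed.

Lemma Exp_ang_ge Th A rho : Th `<=` @effect R d -> psd rho -> Th A -> expv A rho <= Exp_ang rho Th.
Proof.
move=> effTh prho ThA; rewrite Exp_ang_sup; last by exists A.
apply: ub_le_sup; last by exists A.
by exists (Re (\tr rho)) => _ [B ThB <-]; apply: effect_expv_le (effTh _ ThB) prho.
Qed.

Lemma Exp_dem_ge Th rho r : Th !=set0 -> (forall A, Th A -> r <= expv A rho) -> r <= Exp_dem rho Th.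
Proof.
move=> [A ThA] h; rewrite Exp_dem_inf; last by exists A.
by apply: lb_le_inf; [exists (expv A rho), A | move=> _ [B ThB <-]; exact: h].
Qed.

Lemma Exp_ang_le Th rho r : Th !=set0 -> (forall A, Th A -> expv A rho <= r) -> Exp_ang rho Th <= r.
Proof.
move=> [A ThA] h; rewrite Exp_ang_sup; last by exists A.
by apply: ge_sup; [exists (expv A rho), A | move=> _ [B ThB <-]; exact: h].
Qed.

End Expectations.

Section Orders.
Variables (R : realType) (d : nat).
Local Notation M := 'M[R[i]]_d.
Variables (Th Ps : set M).
Hypotheses (effTh : Th `<=` @effect R d) (effPs : Ps `<=` @effect R d).

Lemma le_S_preceq_dem : Th !=set0 -> le_S Th Ps -> preceq_dem Th Ps.
Proof.
move=> [M0 ThM0] ThPs rho [prho _]; have [->|Ps0] := pselect (Ps = set0).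
  rewrite Exp_dem_set0.
  exact: le_trans (Exp_dem_le effTh prho ThM0) (effect_expv_le (effTh ThM0) prho).
apply: Exp_dem_ge => [|N PsN]; first exact/set0P/eqP.
have [A [ThA AN]] := ThPs N PsN.
exact: le_trans (Exp_dem_le effTh prho ThA) (lowner_expv AN prho).
Qed.

Lemma le_H_preceq_ang : Ps !=set0 -> le_H Th Ps -> preceq_ang Th Ps.
Proof.
move=> [N0 PsN0] ThPs rho [prho _]; have [->|Th0] := pselect (Th = set0).
  rewrite Exp_ang_set0.
  exact: le_trans (expv_ge0 (effPs PsN0).1 prho) (Exp_ang_ge effPs prho PsN0).
apply: Exp_ang_le => [|A ThA]; first exact/set0P/eqP.
have [N [PsN AN]] := ThPs A ThA.
exact: le_trans (lowner_expv AN prho) (Exp_ang_ge effPs prho PsN).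
Qed.

Lemma preceq_dem_le_S : Th !=set0 -> mx_closed Th -> mx_convex Th ->
  preceq_dem Th Ps -> le_S Th Ps.
Proof.
move=> Th0 clTh cvxTh ThPs N PsN; apply: contrapT => noA.
have noZ : ~ exists2 Z, Th Z & psd ((1 : R)%:C%C *: (N - Z)).
  by move=> [Z ThZ]; rewrite scale1r => ZN; apply: noA; exists Z.
have [rho rho_dens [delta delta0 sep]] :=
  separating_density (or_introl erefl) effTh (effPs PsN) Th0 clTh cvxTh noZ.
have := ThPs rho rho_dens; have := Exp_dem_le effPs rho_dens.1 PsN.
have : expv N rho + delta <= Exp_dem rho Th.
  by apply: Exp_dem_ge => // A ThA; have := sep A ThA; rewrite !mul1r.
lra.
Qed.

Lemma preceq_ang_le_H : Ps !=set0 -> mx_closed Ps -> mx_convex Ps ->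
  preceq_ang Th Ps -> le_H Th Ps.
Proof.
move=> Ps0 clPs cvxPs ThPs A ThA; apply: contrapT => noN.
have noZ : ~ exists2 Z, Ps Z & psd ((-1 : R)%:C%C *: (A - Z)).
  by move=> [Z PsZ]; rewrite rmorphN1 scaleN1r opprB => AZ; apply: noN; exists Z.
have [rho rho_dens [delta delta0 sep]] :=
  separating_density (or_intror erefl) effPs (effTh ThA) Ps0 clPs cvxPs noZ.
have := ThPs rho rho_dens; have := Exp_ang_ge effTh rho_dens.1 ThA.
have : Exp_ang rho Ps <= expv A rho - delta.
  by apply: Exp_ang_le => // N PsN; have := sep N PsN; rewrite !mulN1r; lra.
lra.
Qed.

End Orders.

(* H_V for a finite set V of qubit variables with |V| = n has dimension 2^n. *)
Theorem theorem3p5 (R : realType) (n : nat) (Th Ps : set 'M[R[i]]_(2 ^ n)) :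
  Th `<=` @effect R (2 ^ n) -> Ps `<=` @effect R (2 ^ n) ->
  mx_convex Th -> mx_convex Ps -> mx_closed Th -> mx_closed Ps ->
  (Th !=set0 -> (preceq_dem Th Ps <-> le_S Th Ps)) /\
  (Ps !=set0 -> (preceq_ang Th Ps <-> le_H Th Ps)).
Proof.
move=> effTh effPs cvxTh cvxPs clTh clPs; split=> ne; split.
- exact: preceq_dem_le_S.
- exact: le_S_preceq_dem.
- exact: preceq_ang_le_H.
- exact: le_H_preceq_ang.
Qed.
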